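(* Let $\Sigma$ be a finite set of denial constraints, $D$ a nonempty instance, and $0<\epsilon<1$ such that $\epsilon|D|$ is an integer. Let $D_k\subseteq D$ with $|D_k|=\epsilon|D|$, and $D'=D\setminus D_k$. Then $$\mathit{inc\text{-}deg}^{c,g_3}(D',\Sigma)\le \frac{1}{1-\epsilon}\,\mathit{inc\text{-}deg}^{c,g_3}(D,\Sigma) \quad\text{and}\quad \mathit{inc\text{-}deg}^{c,g_3}(D,\Sigma)\le \frac{1}{1-\epsilon}\,\mathit{inc\text{-}deg}^{c,g_3}(D',\Sigma)+\epsilon .$$ Moreover, if no tuple of $D_k$ participates in a violation of $\Sigma$ in $D$ (i.e. no tuple of $D_k$ belongs to a subset-minimal set $S\subseteq D$ of tuples jointly violating some constraint of $\Sigma$), then $\mathit{inc\text{-}deg}^{c,g_3}(D,\Sigma)\le \frac{1}{1-\epsilon}\,\mathit{inc\text{-}deg}^{c,g_3}(D',\Sigma)$.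
   Context: A database instance is a finite set of ground atoms (tuples). A denial constraint (DC) is a sentence $\neg\exists\bar x\,(P_1(\bar x_1)\wedge\dots\wedge P_m(\bar x_m)\wedge\varphi)$ with the $P_i$ schema predicates and $\varphi$ a possibly empty conjunction of built-in comparisons; a set $S$ of tuples jointly violates it if $S$ satisfies the existential body. A subset-repair (S-repair) of $D$ wrt. $\Sigma$ is a $\subseteq$-maximal subset $D'\subseteq D$ that satisfies $\Sigma$; a cardinality-repair (C-repair) is an S-repair of maximum cardinality; $\mathit{Crep}(D,\Sigma)$ is the set of C-repairs. For nonempty $D$, $$\mathit{inc\text{-}deg}^{c,g_3}(D,\Sigma)=\frac{|D|-\max\{|D'| : D'\in \mathit{Crep}(D,\Sigma)\}}{|D|}.$$ *)

From HB Require Import structures.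
From mathcomp Require Import all_boot all_order all_algebra.
From Stdlib Require Import ClassicalEpsilon.
Set Implicit Arguments. Unset Strict Implicit. Unset Printing Implicit Defensive.

Section DC.
(* Pred: schema predicate symbols; C: constants, totally ordered
   (for the built-in comparisons). *)
Variables (Pred : eqType) (d : Order.disp_t) (C : orderType d).

Definition atom : eqType := (Pred * seq C)%type.
(* A database instance: a finite set of ground atoms, represented by a list
   read as a set (duplicates / order irrelevant). *)
Definition instance := seq atom.

Inductive term := TVar of nat | TConst of C.
Inductive cmpop := CEq | CNeq | CLt | CLe | CGt | CGe.

(* A denial constraint  ~ exists x, P1(x1) /\ ... /\ Pm(xm) /\ phi. *)
Record dc := DC { dc_body : seq (Pred * seq term);
                  dc_cmp  : seq (cmpop * term * term) }.

Definition eval_term (nu : nat -> C) (t : term) : C :=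
  match t with TVar n => nu n | TConst c => c end.

Definition eval_cmp (nu : nat -> C) (c : cmpop * term * term) : bool :=
  let: (o, t1, t2) := c in
  let x := eval_term nu t1 in let y := eval_term nu t2 in
  match o with
  | CEq => x == y | CNeq => x != y
  | CLt => (x < y)%O | CLe => (x <= y)%O
  | CGt => (y < x)%O | CGe => (y <= x)%O
  end.

Definition violates (S : instance) (s : dc) : Prop :=
  exists nu : nat -> C,
    all (fun a => (a.1, map (eval_term nu) a.2) \in S) (dc_body s) &&
    all (eval_cmp nu) (dc_cmp s).

Definition satisfies (S : instance) (Sigma : seq dc) : Prop :=
  forall s, List.In s Sigma -> ~ violates S s.

Definition subinst (S T : instance) : Prop := {subset S <= T}.
Definition icard (S : instance) : nat := size (undup S).
Definition diff (D K : instance) : instance := [seq t <- D | t \notin K].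

Definition is_Srep (D : instance) (Sigma : seq dc) (R : instance) : Prop :=
  subinst R D /\ satisfies R Sigma /\
  forall R', subinst R R' -> subinst R' D -> satisfies R' Sigma -> subinst R' R.

Definition is_Crep (D : instance) (Sigma : seq dc) (R : instance) : Prop :=
  is_Srep D Sigma R /\ forall R', is_Srep D Sigma R' -> icard R' <= icard R.

Definition pb (P : Prop) : bool :=
  if excluded_middle_informative P then true else false.

(* all sub-lists of a list (finitely many representatives of all subsets) *)
Fixpoint subseqs (s : instance) : seq instance :=
  match s with
  | [::] => [:: [::]]
  | x :: s' => subseqs s' ++ map (cons x) (subseqs s')
  end.

Definition maxCrep (D : instance) (Sigma : seq dc) : nat :=
  \max_(R <- subseqs (undup D) | pb (is_Crep D Sigma R)) icard R.

Definition incdeg (D : instance) (Sigma : seq dc) : rat :=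
  (((icard D)%:R - (maxCrep D Sigma)%:R) / (icard D)%:R)%R.

Definition participates (D : instance) (Sigma : seq dc) (t : atom) : Prop :=
  exists s S, List.In s Sigma /\ subinst S D /\ violates S s /\
    (forall S', subinst S' S -> violates S' s -> subinst S S') /\ t \in S.

End DC.

From HB Require Import structures.
From mathcomp Require Import all_boot all_order all_algebra.
From mathcomp Require Import ring lra.
From Stdlib Require Import Classical ClassicalEpsilon.
Import Order.TTheory GRing.Theory Num.Theory.
Set Implicit Arguments. Unset Strict Implicit.

(* Let n, n' = n - k and m, m' be the sizes of D, D' and of their largest
   consistent subsets, the C-repairs.  A largest consistent subset of D loses at
   most the k tuples of Dk when restricted to D', so m - k <= m' <= m.  When no
   tuple of Dk lies in a minimal violation, adding Dk to a largest consistent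
   subset of D' keeps it consistent, so m = m' + k.  The three inequalities are
   then elementary facts about (n - m)/n and (n' - m')/n' with n' = (1 - eps) n.
   If the empty instance already violates Sigma there are no repairs at all:
   m = m' = 0 and both degrees are 1. *)

Section Repairs.
Variables (Pred : eqType) (d : Order.disp_t) (C : orderType d).
Implicit Types (S T D K X Y : instance Pred C) (Sg : seq (dc Pred C)).

Lemma pbP (P : Prop) : reflect P (pb P).
Proof. by rewrite /pb; case: excluded_middle_informative => h; constructor. Qed.

Lemma violates_subinst S T s : subinst S T -> violates S s -> violates T s.
Proof.
move=> ST [nu /andP[body cmp]]; exists nu; rewrite cmp andbT.
by apply: sub_all body => a /= /ST.
Qed.

Lemma satisfies_subinst S T Sg : subinst S T -> satisfies T Sg -> satisfies S Sg.
Proof. by move=> ST sat s s_in /(violates_subinst ST); apply: sat. Qed.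

Lemma icard_eq_mem S T : S =i T -> icard S = icard T.
Proof.
move=> eqST; apply/perm_size/uniq_perm; rewrite ?undup_uniq // => x.
by rewrite !mem_undup.
Qed.

Lemma icard_subinst S T : subinst S T -> icard S <= icard T.
Proof.
move=> ST; apply: uniq_leq_size (undup_uniq S) _ => x.
by rewrite !mem_undup => /ST.
Qed.

Lemma subinst_icard_ge S T : subinst S T -> icard T <= icard S -> subinst T S.
Proof.
move=> ST le_TS x xT.
have sub : {subset undup S <= undup T} by move=> y; rewrite !mem_undup => /ST.
have [_ eqST] := uniq_min_size (undup_uniq S) sub le_TS.
by move: (eqST x); rewrite !mem_undup xT.
Qed.

Lemma icard_eq0 D : (icard D == 0) = (D == [::]).
Proof.
rewrite /icard size_eq0; apply/eqP/eqP => [/undup_nil //|-> //].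
Qed.

Lemma icard_cat S T : icard (S ++ T) <= icard S + icard T.
Proof. by rewrite /icard undup_cat size_cat leq_add2r size_filter count_size. Qed.

Lemma icard_cat_disjoint S T : (forall x, x \in S -> x \notin T) ->
  icard (S ++ T) = icard S + icard T.
Proof.
move=> disj; rewrite /icard undup_cat size_cat size_filter; congr (_ + _).
by apply/eqP; rewrite -all_count; apply/allP => x; rewrite mem_undup; apply: disj.
Qed.

Lemma icard_diff D K : subinst K D -> icard (diff D K) + icard K = icard D.
Proof.
move=> KD; rewrite -icard_cat_disjoint; last by move=> x; rewrite mem_filter => /andP[].
apply: icard_eq_mem => x; rewrite mem_cat mem_filter.
by case: (boolP (x \in K)) => [/KD -> //|]; rewrite orbF.
Qed.

Lemma subseq_mem_subseqs (R s : instance Pred C) : subseq R s -> R \in subseqs s.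
Proof.
elim: s R => [|x s IHs] [|y R] //=; rewrite mem_cat.
  by move=> _; rewrite IHs ?sub0seq.
case: eqP => [-> sub|_ sub]; last by rewrite IHs.
by rewrite map_f ?orbT ?IHs.
Qed.

Lemma exists_minimal_violation S s : violates S s ->
  exists S', [/\ subinst S' S, violates S' s &
    forall S'', subinst S'' S' -> violates S'' s -> subinst S' S''].
Proof.
move=> viol.
pose P n := pb (exists S', [/\ subinst S' S, violates S' s & icard S' = n]).
have exP : exists n, P n by exists (icard S); rewrite /P; apply/pbP; exists S; split.
case: (ex_minnP exP) => n; rewrite /P => /pbP [S' [S'S viol' <-]] minS'.
exists S'; split=> // S'' S''S' viol''.
have S''S : subinst S'' S by move=> x /S''S' /S'S.
by apply: subinst_icard_ge S''S' (minS' _ _); apply/pbP; exists S''.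
Qed.

Lemma exists_max_consistent D Sg : satisfies [::] Sg ->
  exists X, [/\ subinst X D, satisfies X Sg &
    forall Y, subinst Y D -> satisfies Y Sg -> icard Y <= icard X].
Proof.
move=> sat0.
pose P n := pb (exists X, [/\ subinst X D, satisfies X Sg & icard X = n]).
have exP : exists n, P n by exists 0; rewrite /P; apply/pbP; exists [::]; split.
have boundP n : P n -> n <= icard D.
  by rewrite /P => /pbP [X [XD _ <-]]; apply: icard_subinst.
case: (ex_maxnP exP boundP) => n; rewrite /P => /pbP [X [XD satX <-]] maxX.
by exists X; split=> // Y YD satY; apply: maxX; apply/pbP; exists Y.
Qed.

Lemma maxCrep_max D Sg X : subinst X D -> satisfies X Sg ->
  (forall Y, subinst Y D -> satisfies Y Sg -> icard Y <= icard X) ->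
  maxCrep D Sg = icard X.
Proof.
move=> XD satX maxX; apply/eqP; rewrite eqn_leq; apply/andP; split.
  by apply/bigmax_leqP_seq => R _ /pbP [[RD [satR _]] _]; apply: maxX.
(* [maxCrep] only ranges over subsequences of [undup D]; [X0] represents [X]. *)
pose X0 := [seq x <- undup D | x \in X].
have X0E : X0 =i X by move=> x; rewrite mem_filter mem_undup andb_idr // => /XD.
have X0D : subinst X0 D by move=> x; rewrite X0E => /XD.
have satX0 : satisfies X0 Sg by apply: satisfies_subinst satX => x; rewrite X0E.
have maxX0 Y : subinst Y D -> satisfies Y Sg -> icard Y <= icard X0.
  by rewrite (icard_eq_mem X0E); apply: maxX.
have CrepX0 : is_Crep D Sg X0.
  split; last by move=> R [RD [satR _]]; apply: maxX0.
  do 2!split=> //; move=> R X0R RD satR.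
  exact: subinst_icard_ge X0R (maxX0 _ RD satR).
rewrite -(icard_eq_mem X0E); apply: leq_bigmax_seq; last exact/pbP.
exact/subseq_mem_subseqs/filter_subseq.
Qed.

Lemma maxCrep_unsat0 D Sg : ~ satisfies [::] Sg -> maxCrep D Sg = 0.
Proof.
move=> unsat0; apply/eqP; rewrite -leqn0.
apply/bigmax_leqP_seq => R _ /pbP [[_ [satR _]] _].
by case: unsat0; apply: satisfies_subinst satR.
Qed.

Lemma maxCrep_le_icard D Sg : maxCrep D Sg <= icard D.
Proof. by apply/bigmax_leqP_seq => R _ /pbP [[RD _] _]; apply: icard_subinst. Qed.

Lemma icard_le_maxCrep D Sg Y : subinst Y D -> satisfies Y Sg -> icard Y <= maxCrep D Sg.
Proof.
move=> YD satY; have sat0 : satisfies [::] Sg by apply: satisfies_subinst satY.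
have [X [XD satX maxX]] := exists_max_consistent D sat0.
by rewrite (maxCrep_max XD satX maxX); apply: maxX.
Qed.

Lemma maxCrep_attained D Sg : satisfies [::] Sg ->
  exists X, [/\ subinst X D, satisfies X Sg & icard X = maxCrep D Sg].
Proof.
move=> sat0; have [X [XD satX maxX]] := exists_max_consistent D sat0.
by exists X; rewrite (maxCrep_max XD satX maxX).
Qed.

Lemma maxCrep_subinst D' D Sg : subinst D' D -> maxCrep D' Sg <= maxCrep D Sg.
Proof.
move=> D'D; case: (classic (satisfies [::] Sg)) => [sat0|unsat0].
  have [X [XD satX <-]] := maxCrep_attained D' sat0.
  by apply: icard_le_maxCrep satX => x /XD /D'D.
by rewrite maxCrep_unsat0.
Qed.

Lemma maxCrep_le_diff D K Sg : maxCrep D Sg <= maxCrep (diff D K) Sg + icard K.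
Proof.
case: (classic (satisfies [::] Sg)) => [sat0|unsat0]; last by rewrite maxCrep_unsat0.
have [X [XD satX <-]] := maxCrep_attained D sat0.
have XK : subinst X (diff X K ++ K).
  by move=> x xX; rewrite mem_cat mem_filter xX andbT orNb.
apply: leq_trans (icard_subinst XK) _; apply: leq_trans (icard_cat _ _) _.
rewrite leq_add2r; apply: icard_le_maxCrep.
  by move=> x; rewrite !mem_filter => /andP[-> /XD].
by apply: satisfies_subinst satX => x; rewrite mem_filter => /andP[].
Qed.

Lemma maxCrep_diff_nonparticipating D K Sg :
  satisfies [::] Sg -> subinst K D ->
  (forall t, t \in K -> ~ participates D Sg t) ->
  maxCrep (diff D K) Sg + icard K <= maxCrep D Sg.
Proof.
move=> sat0 KD nonpart; have [X' [X'D' satX' <-]] := maxCrep_attained (diff D K) sat0.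
have X'D x : x \in X' -> x \in D by move=> /X'D'; rewrite mem_filter => /andP[].
rewrite -icard_cat_disjoint; last by move=> x /X'D'; rewrite mem_filter => /andP[].
apply: icard_le_maxCrep => [x|s s_in viol]; first by rewrite mem_cat => /orP[/X'D|/KD].
have [S [SX'K violS minS]] := exists_minimal_violation viol.
case: (boolP (all (mem X') S)) => [/allP SX'|/allPn [t tS /negP tX']].
  by apply: (satX' s s_in); apply: violates_subinst violS.
have tK : t \in K by move: (SX'K t tS); rewrite mem_cat => /orP[/tX'|].
apply: (nonpart t tK); exists s, S; split=> //; split=> //.
by move=> x /SX'K; rewrite mem_cat => /orP[/X'D|/KD].
Qed.
End Repairs.

Local Open Scope ring_scope.

Section Ratios.
Variable R : numFieldType.

Lemma ler_divl2l (x y z : R) : 0 <= x -> 0 < y -> y <= z -> x / z <= x / y.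
Proof.
move=> x_ge0 y_gt0 yz; apply: ler_wpM2l => //.
by rewrite lef_pV2 ?posrE // (lt_le_trans y_gt0).
Qed.

Lemma ler_inv_subr1 (x e : R) : 0 <= x -> 0 <= e -> e < 1 -> x <= (1 - e)^-1 * x.
Proof.
move=> x_ge0 e_ge0 e_lt1; apply: ler_peMl => //.
by rewrite invr_ge1 ?unitfE ?subr_eq0 ?subr_gt0 ?gerBl // gt_eqF.
Qed.

Section Scaled.
Variables (N N' e : R).
Hypotheses (N_gt0 : 0 < N) (e_ge0 : 0 <= e) (e_lt1 : e < 1) (N'E : N' = (1 - e) * N).

Let subr1_gt0 : 0 < 1 - e. Proof. by rewrite subr_gt0. Qed.
Let N'_gt0 : 0 < N'. Proof. by rewrite N'E mulr_gt0. Qed.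

Lemma ratio_shrink_le (M M' : R) : N' - M' <= N - M ->
  (N' - M') / N' <= (1 - e)^-1 * ((N - M) / N).
Proof.
by move=> h; rewrite mulrCA -invfM -N'E ler_wpM2r // invr_ge0 ltW.
Qed.

Lemma ratio_grow_le_add (M M' : R) : 0 <= N' - M' -> M' <= M ->
  (N - M) / N <= (1 - e)^-1 * ((N' - M') / N') + e.
Proof.
move=> h MM'.
have -> : (N - M) / N = (N' - M) / N + e by rewrite N'E; field; rewrite gt_eqF.
rewrite lerD2r.
have h1 : (N' - M) / N <= (N' - M') / N.
  by apply: ler_wpM2r; [rewrite invr_ge0 ltW | rewrite lerD2l lerN2].
have h2 : (N' - M') / N <= (N' - M') / N'.
  by apply: ler_divl2l; rewrite // N'E; apply: ler_piMl; [exact: ltW | rewrite gerBl].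
have h3 : (N' - M') / N' <= (1 - e)^-1 * ((N' - M') / N').
  by apply: ler_inv_subr1; rewrite // divr_ge0 // ltW.
exact: le_trans h1 (le_trans h2 h3).
Qed.

Lemma ratio_grow_le (M M' : R) : 0 <= N - M -> (1 - e) * (N - M) <= N' - M' ->
  (N - M) / N <= (1 - e)^-1 * ((N' - M') / N').
Proof.
move=> h hM.
have h1 : (N - M) / N = (1 - e) * (N - M) / N'.
  by rewrite N'E; field; rewrite !gt_eqF.
have h2 : (1 - e) * (N - M) / N' <= (N' - M') / N'.
  by apply: ler_wpM2r; rewrite // invr_ge0 ltW.
have h3 : 0 <= (N' - M') / N'.
  by rewrite divr_ge0 ?(ltW N'_gt0) // (le_trans _ hM) // mulr_ge0 // ltW.
by rewrite h1; apply: le_trans h2 _; exact: ler_inv_subr1.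
Qed.
End Scaled.
End Ratios.

Theorem proposition3 (Pred : eqType) (d : Order.disp_t) (C : orderType d)
  (Sigma : seq (dc Pred C)) (D Dk : instance Pred C) (eps : rat) :
  D != [::] ->
  0 < eps -> eps < 1 ->
  (exists k : nat, eps * (icard D)%:R = k%:R) ->
  subinst Dk D ->
  (icard Dk)%:R = eps * (icard D)%:R ->
  incdeg (diff D Dk) Sigma <= (1 - eps)^-1 * incdeg D Sigma /\
  incdeg D Sigma <= (1 - eps)^-1 * incdeg (diff D Dk) Sigma + eps /\
  ((forall t, t \in Dk -> ~ participates D Sigma t) ->
   incdeg D Sigma <= (1 - eps)^-1 * incdeg (diff D Dk) Sigma).
Proof.
move=> D_neq0 eps_gt0 eps_lt1 _ DkD DkE.
have D'D : subinst (diff D Dk) D by move=> x; rewrite mem_filter => /andP[].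
have N_gt0 : 0 < (icard D)%:R :> rat by rewrite ltr0n lt0n icard_eq0.
have NE : (icard D)%:R = (icard (diff D Dk))%:R + (icard Dk)%:R :> rat.
  by rewrite -natrD icard_diff.
have N'E : (icard (diff D Dk))%:R = (1 - eps) * (icard D)%:R :> rat.
  by rewrite mulrBl mul1r -DkE NE addrK.
have := maxCrep_le_icard (diff D Dk) Sigma; rewrite -(ler_nat rat) => M'_le_N'.
have := maxCrep_le_icard D Sigma; rewrite -(ler_nat rat) => M_le_N.
have := maxCrep_subinst Sigma D'D; rewrite -(ler_nat rat) => M'_le_M.
have := maxCrep_le_diff D Dk Sigma; rewrite -(ler_nat rat) natrD => M_le.
have eps_ge0 := ltW eps_gt0.
rewrite /incdeg; split; [|split].
- by apply: ratio_shrink_le => //; lra.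
- by apply: ratio_grow_le_add => //; lra.
move=> nonpart; apply: ratio_grow_le => //; first lra.
case: (classic (satisfies [::] Sigma)) => [sat0|unsat0]; last first.
  by rewrite !maxCrep_unsat0 // !subr0 N'E.
have := maxCrep_diff_nonparticipating sat0 DkD nonpart.
rewrite -(ler_nat rat) natrD => M_ge.
have -> : (icard (diff D Dk))%:R - (maxCrep (diff D Dk) Sigma)%:R =
          (icard D)%:R - (maxCrep D Sigma)%:R :> rat by lra.
by apply: ler_piMl; rewrite ?subr_ge0 // gerBl.
Qed.
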